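(* The Lie algebra $\Lambda(\mathbb{Q}\mathrm{Tree})$ is not finitely generated. Furthermore, the Lie algebra $\Lambda(\mathbb{Q}\mathrm{Tree}^-)$ is not finitely generated either.
   Context: $\mathrm{Tree}((m))$, $m\ge1$, is the set of planar rooted trees with one root at the bottom and $m$ leaves at the top labeled $1,\dots,m$ from left to right, every internal vertex having at least two inputs; equivalently, meaningful ways of inserting parentheses into the word $12\cdots m$ (e.g. $\mathrm{Tree}((1))=\{1\}$, $\mathrm{Tree}((2))=\{(12)\}$, $\mathrm{Tree}((3))=\{((12)3),(1(23)),(123)\}$). Composition $S\circ_iT$ grafts the root of $T$ to the $i$-th leaf of $S$; this makes $\mathrm{Tree}$ a nonsymmetric operad of sets with unit the trivial tree $1$. For $c\in\mathrm{Tree}((m))$, $m\ge2$, the face $\partial_ic\in\mathrm{Tree}((m-1))$ is obtained by erasing the $i$-th leaf of $c$ (suppressing any vertex left with one input), e.g. $\partial_i((1(23))4)=((12)3)$ for $1\le i\le3$, $\partial_4((1(23))4)=(1(23))$. The operad $\mathrm{Tree}^-$ has $\mathrm{Tree}^-((0))=\{\circ\}$, $\mathrm{Tree}^-((m))=\mathrm{Tree}((m))$ for $m\ge1$, grafting compositions, and $c\circ_i\circ=\partial_ic$, $1\circ_1\circ=\circ$. For a nonsymmetric operad of sets $\mathcal{C}$, $\Lambda(\mathbb{Q}\mathcal{C})=\bigoplus_{m\ge0}\mathbb{Q}\mathcal{C}((m))$ with Lie bracket $[c,d]=\sum_{t=1}^{j}d\circ_tc-\sum_{s=1}^{k}c\circ_sd$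 for $c\in\mathcal{C}((k))$, $d\in\mathcal{C}((j))$, extended bilinearly. *)

From HB Require Import structures.
From mathcomp Require Import all_boot all_order all_algebra.
From mathcomp Require Import finmap.
From mathcomp Require Import monalg.
Set Implicit Arguments.
Unset Strict Implicit.
Unset Printing Implicit Defensive.
Import Order.TTheory GRing.Theory Num.Theory.

(* ordered list of inputs.  Leaves are numbered 1..m left to right.   *)
Inductive tree := Leaf | Node of seq tree.

Fixpoint tree_enc (t : tree) : GenTree.tree unit :=
  match t with
  | Leaf => GenTree.Leaf tt
  | Node cs => GenTree.Node 0 (map tree_enc cs)
  end.

Fixpoint tree_dec (g : GenTree.tree unit) : tree :=
  match g with
  | GenTree.Leaf _ => Leaf
  | GenTree.Node _ gs => Node (map tree_dec gs)
  end.

Lemma tree_encK : cancel tree_enc tree_dec.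
Proof.
rewrite /cancel; fix IH 1; case => [|cs] //=; congr Node.
elim: cs => //= c cs IHcs; by rewrite IH IHcs.
Qed.

HB.instance Definition _ := Countable.copy tree (can_type tree_encK).

Fixpoint leaves (t : tree) : nat :=
  match t with
  | Leaf => 1
  | Node cs => sumn (map leaves cs)
  end.

Fixpoint wf (t : tree) : bool :=
  match t with
  | Leaf => true
  | Node cs => (1 < size cs) && all wf cs
  end.

(* graft0 s i t : graft the root of t onto the leaf of s with 0-based index i *)
Fixpoint graft0 (s : tree) (i : nat) (t : tree) {struct s} : tree :=
  match s with
  | Leaf => if i == 0%N then t else Leaf
  | Node cs =>
      Node ((fix gl (cs : seq tree) (i : nat) {struct cs} : seq tree :=
               match cs with
               | [::] => [::]
               | c :: cs' => if i < leaves c then graft0 c i t :: cs'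
                             else c :: gl cs' (i - leaves c)%N
               end) cs i)
  end.

(* erase0 s i : erase the leaf with 0-based index i, suppressing every
   vertex left with a single input; None if the whole tree disappears *)
Fixpoint erase0 (s : tree) (i : nat) {struct s} : option tree :=
  match s with
  | Leaf => None
  | Node cs =>
      let cs' := (fix el (cs : seq tree) (i : nat) {struct cs} : seq tree :=
                    match cs with
                    | [::] => [::]
                    | c :: cs' =>
                        if i < leaves c then
                          match erase0 c i with
                          | None => cs'
                          | Some c' => c' :: cs'
                          end
                        else c :: el cs' (i - leaves c)%N
                    end) cs i in
      match cs' with
      | [:: c] => Some c
      | _ => Some (Node cs')
      end
  end.

Definition Tree := {t : tree | wf t}.

Definition Tree_leaf : Tree := exist (fun t => wf t) Leaf erefl.

Definition Tree_arity (c : Tree) : nat := leaves (val c).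

(* c o_i d (1-based i): grafting.  The result of grafting well-formed  *)
(* trees is well-formed, so [insubd] never falls back to its default.  *)
Definition Tree_comp (c : Tree) (i : nat) (d : Tree) : Tree :=
  insubd Tree_leaf (graft0 (val c) i.-1 (val d)).

(* face \partial_i c (1-based i), for c with at least 2 leaves *)
Definition Tree_face (i : nat) (c : Tree) : Tree :=
  insubd Tree_leaf (odflt Leaf (erase0 (val c) i.-1)).

(* Tree^- : None is the arity-0 element \circ, Some c is c in Tree((m)). *)
Definition TreeM := option Tree.

Definition TreeM_arity (c : TreeM) : nat :=
  match c with None => 0%N | Some c => Tree_arity c end.

Definition TreeM_comp (c : TreeM) (i : nat) (d : TreeM) : TreeM :=
  match c, d with
  | Some c, Some d => Some (Tree_comp c i d)
  | Some c, None => if val c == Leaf then None      (* 1 o_1 \circ = \circ *)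
                    else Some (Tree_face i c)       (* c o_i \circ = \partial_i c *)
  | None, _ => None   (* never used: \circ has arity 0 *)
  end.

(* Lambda(Q C) for a nonsymmetric operad of sets C given by its carrier *)
(* C, arity and partial compositions (1-based): formal finite           *)
(* Q-linear combinations of elements of C.                              *)
Local Open Scope ring_scope.
Definition Lam (C : choiceType) := {malg rat[C]}.

Definition lam_br_basis (C : choiceType) (ar : C -> nat)
    (comp : C -> nat -> C -> C) (c d : C) : Lam C :=
  \sum_(1 <= t < (ar d).+1) << comp d t c >>
  - \sum_(1 <= s < (ar c).+1) << comp c s d >>.

Definition lam_br (C : choiceType) (ar : C -> nat)
    (comp : C -> nat -> C -> C) (f g : Lam C) : Lam C :=
  \sum_(c <- msupp f) \sum_(d <- msupp g)
     (f@_c * g@_d) *: lam_br_basis ar comp c d.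

Inductive lie_gen (C : choiceType) (ar : C -> nat)
    (comp : C -> nat -> C -> C) (S : seq (Lam C)) : Lam C -> Prop :=
  | lie_gen_in x : x \in S -> lie_gen ar comp S x
  | lie_gen_0 : lie_gen ar comp S 0
  | lie_gen_add x y : lie_gen ar comp S x -> lie_gen ar comp S y ->
                      lie_gen ar comp S (x + y)
  | lie_gen_scale (a : rat) x : lie_gen ar comp S x -> lie_gen ar comp S (a *: x)
  | lie_gen_br x y : lie_gen ar comp S x -> lie_gen ar comp S y ->
                     lie_gen ar comp S (lam_br ar comp x y).

Definition lie_fin_gen (C : choiceType) (ar : C -> nat)
    (comp : C -> nat -> C -> C) : Prop :=
  exists S : seq (Lam C), forall x : Lam C, lie_gen ar comp S x.

(* Neither grafting nor erasing a leaf increases the largest number of inputs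
   of a vertex of a tree.  Hence, for every N, the combinations of trees all of
   whose vertices have at most N inputs form a Lie subalgebra.  A finite set of
   elements lies in such a subalgebra for N large, whereas the corolla with
   N + 1 leaves does not. *)
From mathcomp Require Import all_boot all_order all_algebra.
From mathcomp Require Import finmap monalg zify.
Set Implicit Arguments.
Unset Strict Implicit.
Unset Printing Implicit Defensive.
Import Order.TTheory GRing.Theory Num.Theory.

Lemma tree_ind_mem (P : tree -> Prop) : P Leaf ->
  (forall cs : seq tree, (forall c, c \in cs -> P c) -> P (Node cs)) -> forall t, P t.
Proof.
move=> PLeaf PNode; fix IH 1; case=> [|cs]; first exact: PLeaf.
apply: PNode; suff: foldr (fun c Q => P c /\ Q) True cs.
  elim: cs {IH} => [_ c|c cs IHcs [Pc Pcs] c']; first by rewrite in_nil.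
  by rewrite in_cons => /predU1P[-> | /(IHcs Pcs)].
elim: cs => [|c cs IHcs]; [exact: I | split; [exact: IH | exact: IHcs]].
Qed.

Fixpoint max_inputs (t : tree) : nat :=
  match t with
  | Leaf => 0
  | Node cs => maxn (size cs) (foldr maxn 0 (map max_inputs cs))
  end.

Notation max_inputs_seq cs := (foldr maxn 0 (map max_inputs cs)).

Fixpoint graft_seq (t : tree) (cs : seq tree) (i : nat) : seq tree :=
  match cs with
  | [::] => [::]
  | c :: cs' => if i < leaves c then graft0 c i t :: cs'
                else c :: graft_seq t cs' (i - leaves c)
  end.

Lemma graft0_node cs i t : graft0 (Node cs) i t = Node (graft_seq t cs i).
Proof. by congr Node; elim: cs i => //= c cs IH i; rewrite IH. Qed.

Fixpoint erase_seq (cs : seq tree) (i : nat) : seq tree :=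
  match cs with
  | [::] => [::]
  | c :: cs' =>
      if i < leaves c then
        if erase0 c i is Some c' then c' :: cs' else cs'
      else c :: erase_seq cs' (i - leaves c)
  end.

Lemma erase0_node cs i : erase0 (Node cs) i =
  if erase_seq cs i is [:: c] then Some c else Some (Node (erase_seq cs i)).
Proof. by []. Qed.

Lemma max_inputs_graft0 s i t :
  max_inputs (graft0 s i t) <= maxn (max_inputs s) (max_inputs t).
Proof.
elim/tree_ind_mem: s i => [i | cs IH i].
  by rewrite /=; case: (i == 0); rewrite /= ?leq_maxr.
rewrite graft0_node /=.
suff [-> le_seq] : size (graft_seq t cs i) = size cs /\
    max_inputs_seq (graft_seq t cs i) <= maxn (max_inputs_seq cs) (max_inputs t).
  move: le_seq; lia.
elim: cs IH i => [|c cs IHcs] //= IH i.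
have IHc := IH c (mem_head c cs).
have {}IH c' c'cs := IH c' (@mem_behead _ (c :: cs) c' c'cs).
case: ifP => _ /=; first by split=> //; have := IHc i; lia.
have [-> le_seq] := IHcs IH (i - leaves c); split=> //; lia.
Qed.

Lemma max_inputs_erase0 s i s' :
  erase0 s i = Some s' -> max_inputs s' <= max_inputs s.
Proof.
elim/tree_ind_mem: s i s' => [//| cs IH] i s'.
rewrite erase0_node /=.
suff [le_size le_seq] : size (erase_seq cs i) <= size cs /\
    max_inputs_seq (erase_seq cs i) <= max_inputs_seq cs.
  case E: (erase_seq cs i) le_size le_seq => [|c [|c2 cs']] /= + + [<-] /=; lia.
elim: cs IH i {s'} => [|c cs IHcs] //= IH i.
have IHc := IH c (mem_head c cs).
have {}IH c' c'cs := IH c' (@mem_behead _ (c :: cs) c' c'cs).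
case: ifP => _ /=.
  by case E: (erase0 c i) => [c'|] /=; [have := IHc _ _ E | ]; split; lia.
have [le_size le_seq] := IHcs IH (i - leaves c); split; lia.
Qed.

Definition Tree_max_inputs (c : Tree) : nat := max_inputs (val c).

Definition TreeM_max_inputs (c : TreeM) : nat :=
  if c is Some c then Tree_max_inputs c else 0.

Lemma Tree_max_inputs_comp c i d :
  Tree_max_inputs (Tree_comp c i d) <= maxn (Tree_max_inputs c) (Tree_max_inputs d).
Proof. by rewrite /Tree_max_inputs val_insubd; case: ifP => // _; apply: max_inputs_graft0. Qed.

Lemma Tree_max_inputs_face i c : Tree_max_inputs (Tree_face i c) <= Tree_max_inputs c.
Proof.
rewrite /Tree_max_inputs val_insubd; case: ifP => // _.
by case E: (erase0 (val c) i.-1) => [t|] //=; apply: max_inputs_erase0 E.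
Qed.

Lemma TreeM_max_inputs_comp c i d :
  TreeM_max_inputs (TreeM_comp c i d) <= maxn (TreeM_max_inputs c) (TreeM_max_inputs d).
Proof.
case: c d => [c|] [d|] //=; first exact: Tree_max_inputs_comp.
by case: ifP => //= _; rewrite maxn0; apply: Tree_max_inputs_face.
Qed.

Lemma corolla_wf n : wf (Node (nseq n.+2 Leaf)).
Proof. by elim: n. Qed.

Definition corolla n : Tree := exist (fun t => wf t) _ (corolla_wf n).

Lemma Tree_max_inputs_corolla n : Tree_max_inputs (corolla n) = n.+2.
Proof.
rewrite /Tree_max_inputs /= size_nseq.
suff ->: max_inputs_seq (nseq n Leaf) = 0 by [].
by elim: n => //= n ->.
Qed.

Local Open Scope ring_scope.

Section UnboundedFiltration.

Variables (C : choiceType) (ar : C -> nat) (comp : C -> nat -> C -> C).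
Variable h : C -> nat.
Hypothesis h_comp : forall c i d, (h (comp c i d) <= maxn (h c) (h d))%N.

Definition bounded_support N (x : Lam C) := forall c, (N < h c)%N -> x@_c = 0.

Lemma mcoeffU_bounded N c e :
  (h c <= N)%N -> (N < h e)%N -> (<< c >> : Lam C)@_e = 0.
Proof.
move=> hc he; rewrite mcoeffU; case: eqP => // ce.
by move: (leq_ltn_trans hc he); rewrite ce ltnn.
Qed.

Lemma lam_br_basis_bounded N c d : (h c <= N)%N -> (h d <= N)%N ->
  bounded_support N (lam_br_basis ar comp c d).
Proof.
move=> hc hd e he; rewrite /lam_br_basis mcoeffB !raddf_sum /=.
have comp_bounded c' i d' : (h c' <= N)%N -> (h d' <= N)%N -> (h (comp c' i d') <= N)%N.
  by move=> hc' hd'; apply: leq_trans (h_comp _ _ _) _; rewrite geq_max hc' hd'.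
rewrite !big1 ?subr0 // => i _; apply/eqP; rewrite ?oppr_eq0; apply/eqP.
all: by apply: (@mcoeffU_bounded N _ e _ he); apply: comp_bounded.
Qed.

Lemma lie_gen_bounded S N : (forall s, s \in S -> bounded_support N s) ->
  forall x, lie_gen ar comp S x -> bounded_support N x.
Proof.
move=> SN x; elim=> {x} [x /SN //| c _ | x y _ hx _ hy c hc | a x _ hx c hc | x y _ hx _ hy e he].
- by rewrite mcoeff0.
- by rewrite mcoeffD hx // hy // addr0.
- by rewrite mcoeffZ hx // mulr0.
rewrite /lam_br raddf_sum /= big1 // => c _; rewrite raddf_sum /= big1 // => d _.
rewrite mcoeffZ; have [hc | hc] := leqP (h c) N; last by rewrite hx // !mul0r.
have [hd | hd] := leqP (h d) N; last by rewrite (hy d) // mulr0 mul0r.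
by rewrite (@lam_br_basis_bounded N) // mulr0.
Qed.

Lemma not_lie_fin_gen_unbounded :
  (forall N, exists c, (N < h c)%N) -> ~ lie_fin_gen ar comp.
Proof.
move=> h_unbounded [S genS].
pose N := (\max_(s <- S) \max_(c <- msupp s) h c)%N.
have S_bounded s : s \in S -> bounded_support N s.
  move=> sS c hc; apply: mcoeff_outdom; apply: contraTN hc => cs.
  by rewrite -leqNgt /N (big_rem s sS) (big_rem c cs) /= -maxnA leq_maxl.
have [c hc] := h_unbounded N.
have := lie_gen_bounded S_bounded (genS << c >>) hc.
by rewrite mcoeffU eqxx => /eqP; rewrite oner_eq0.
Qed.

End UnboundedFiltration.

Theorem corollary6p5 :
  ~ lie_fin_gen Tree_arity Tree_comp /\ ~ lie_fin_gen TreeM_arity TreeM_comp.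
Proof.
have Tree_unbounded N : exists c, (N < Tree_max_inputs c)%N.
  by exists (corolla N); rewrite Tree_max_inputs_corolla ltnW.
split; first exact: not_lie_fin_gen_unbounded Tree_max_inputs_comp Tree_unbounded.
apply: not_lie_fin_gen_unbounded TreeM_max_inputs_comp _ => N.
by have [c hc] := Tree_unbounded N; exists (Some c).
Qed.
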